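(* For every constant $k>0$ there is a constant $K$ such that the following holds for all even $n$. Let $a$ be odd with $1\le a<n/2$, and let $y\in\{0,1\}^n$ with $\min\{|y|_1,n-|y|_1\}=a$. Let $N\ge N_a:=K a^{5/2}n^2/(n-2a)^{3/2}$. Independently $N$ times, sample an offspring of $y$ by flipping exactly $n/2-1$ positions chosen uniformly at random (without repetition), and let $Y$ be the number of offspring $z$ with $|z|_1=n/2$. Then, if $a\ge 3$, $$\Pr\big(Y\ge N(p_a+p_{a-2})/2\big)\le\exp\!\big(-k(n-2a)^{1/2}\big),$$ and if $a\le n/2-2$, $$\Pr\big(Y\le N(p_{a+2}+p_a)/2\big)\le\exp\!\big(-k(n-2a)^{1/2}\big).$$
   Context: For $x\in\{0,1\}^n$, $|x|_1=\sum_ix_i$. For odd $b$ with $1\le b\le n/2$, $p_b:=\binom{n-b}{(n-b-1)/2}\binom{b}{(b-1)/2}\big/\binom{n}{n/2-1}$; this is the probability that flipping exactly $n/2-1$ uniformly random positions of a string $x$ with $\min\{|x|_1,n-|x|_1\}=b$ yields a string with exactly $n/2$ ones. *)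

From Stdlib Require Import Reals.
From mathcomp Require Import all_boot.

Set Implicit Arguments.
Unset Strict Implicit.
Unset Printing Implicit Defensive.

Definition ones (n : nat) (x : {ffun 'I_n -> bool}) : nat := #|[set i | x i]|.

Definition flip (n : nat) (x : {ffun 'I_n -> bool}) (S : {set 'I_n}) :
  {ffun 'I_n -> bool} := [ffun i => xorb (x i) (i \in S)].

(* sample space of N independent offspring: N-tuples of subsets of
   positions, each of size n/2 - 1; the uniform distribution on it is
   exactly N independent uniform choices of n/2-1 distinct positions. *)
Definition offspring_space (n N : nat) : {set {ffun 'I_N -> {set 'I_n}}} :=
  [set f : {ffun 'I_N -> {set 'I_n}} | [forall i, #|f i| == (n./2).-1]].

Definition Ycount (n N : nat) (y : {ffun 'I_n -> bool})
  (f : {ffun 'I_N -> {set 'I_n}}) : nat :=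
  #|[set i : 'I_N | ones (flip y (f i)) == n./2]|.

Definition prob_event (n N : nat) (E : pred {ffun 'I_N -> {set 'I_n}}) : R :=
  Rdiv (INR #|[set f in offspring_space n N | E f]|)
       (INR #|offspring_space n N|).

Definition Rleb (x y : R) : bool := if Rle_dec x y then true else false.

Definition p_ (n b : nat) : R :=
  Rdiv (Rmult (INR 'C(n - b, (n - b).-1./2)) (INR 'C(b, b.-1./2)))
       (INR 'C(n, (n./2).-1)).

(* Each offspring is balanced independently with probability p_a, so Y is a
   binomial count and the Chernoff bound in relative-entropy form applies with
   the threshold halfway between p_a and its neighbour; the relative entropy is
   at least (gap)^2 / (16 p), where p is the larger of the two probabilities.
   Writing p_b through central binomial coefficients gives the exact ratio
   p_(b+2) / p_b = (b+2)(n-b+1) / ((b+3)(n-b)), hence a relative gap of order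
   (n - 2a) / (a n), while the central-binomial estimates give p_b >= 1/(3 sqrt a).
   The exponent is then at least N (n-2a)^2 / (3072 a^(5/2) n^2), which is
   k sqrt (n - 2a) as soon as N >= 3072 k a^(5/2) n^2 / (n-2a)^(3/2). *)

From Stdlib Require Import Reals Lra Lia.
From mathcomp Require Import all_boot zify Rstruct.

Set Implicit Arguments.
Unset Strict Implicit.
Unset Printing Implicit Defensive.

Section SetCounting.
Variable T : finType.
Implicit Types A S X Z : {set T}.

Lemma cards_xor A S :
  #|[set i | xorb (i \in A) (i \in S)]| + 2 * #|A :&: S| = #|A| + #|S|.
Proof.
have -> : [set i | xorb (i \in A) (i \in S)] = (A :|: S) :\: (A :&: S).
  by apply/setP=> i; rewrite !inE; case: (i \in A); case: (i \in S).
have := cardsID (A :&: S) (A :|: S); rewrite (setIidPr _) ?setIS ?subsetUr //.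
  have := cardsUI A S; lia.
by apply/subsetP=> i; rewrite !inE => /andP[->].
Qed.

Lemma card_draws_meet A (j r : nat) :
  #|[set S : {set T} | (#|S| == j + r) && (#|A :&: S| == j)]|
  = 'C(#|A|, j) * 'C(#|~: A|, r).
Proof.
pose PA := [set X : {set T} | X \subset A & #|X| == j].
pose PC := [set Z : {set T} | Z \subset ~: A & #|Z| == r].
have meetU X Z : X \subset A -> Z \subset ~: A ->
    (A :&: (X :|: Z), ~: A :&: (X :|: Z)) = (X, Z).
  move=> sXA sZC; have dXC : [disjoint X & ~: A] by rewrite -subsets_disjoint.
  have dZA : [disjoint Z & A] by rewrite disjoints_subset.
  by rewrite !setIUr (setIidPr sXA) (setIidPr sZC) setIC (disjoint_setI0 dZA)
             [~: A :&: X]setIC (disjoint_setI0 dXC) setU0 set0U.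
rewrite -!cards_draws -/PA -/PC -cardsX.
have -> : [set S : {set T} | (#|S| == j + r) && (#|A :&: S| == j)]
        = (fun p => p.1 :|: p.2) @: setX PA PC.
  apply/setP=> S; rewrite inE; apply/andP/imsetP => [[/eqP cS /eqP cAS]|].
    exists (A :&: S, ~: A :&: S); last by rewrite /= -setIUl setUCr setTI.
    rewrite !inE !subsetIl cAS eqxx /=.
    by have := cardsID A S; rewrite setDE setIC [S :&: ~: A]setIC; lia.
  case=> [[X Z]]; rewrite !inE /= => /andP[/andP[sXA /eqP cX] /andP[sZC /eqP cZ]] ->.
  case: (meetU X Z sXA sZC) => -> _; split; last by rewrite cX.
  rewrite cardsU cX cZ.
  have /disjoint_setI0 -> : [disjoint X & Z].
    rewrite disjoints_subset; apply: subset_trans sXA _.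
    by rewrite -disjoints_subset disjoint_sym disjoints_subset.
  by rewrite cards0 subn0.
apply: card_in_imset; apply: (can_in_inj (g := fun S => (A :&: S, ~: A :&: S))).
by case=> X Z; rewrite !inE => /andP[/andP[sXA _] /andP[sZC _]]; apply: meetU.
Qed.

End SetCounting.

Lemma mul_bin_odd_center m :
  'C(m.+1.*2.+1, m.+1) * m.+2 = 2 * (2 * m + 3) * 'C(m.*2.+1, m).
Proof.
have e1 := mul_bin_diag m.+1.*2.+1 m.
have e2 := mul_bin_down m.+1.*2 m.
rewrite /= in e1 e2; rewrite doubleS in e1 e2 *.
apply/eqP; rewrite -(eqn_pmul2l (ltn0Sn m)); apply/eqP.
rewrite -!muln2 in e1 e2 *.
have {}e2 : (m * 2).+2 * 'C((m * 2).+1, m) = m.+2 * 'C((m * 2).+2, m).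
  by rewrite e2; congr (_ * _); lia.
nia.
Qed.

Lemma mul_bin_center_pred m :
  'C(m.+1.*2, m) * m.+2 = m.+1.*2 * 'C(m.*2.+1, m).
Proof.
have := mul_bin_down m.+1.*2 m; rewrite /= doubleS.
have -> : m.*2.+2 - m = m.+2 by rewrite -addnn; lia.
by move=> ->; rewrite mulnC.
Qed.

(* Read with [w = |y|_1], [s = |S|], [x = |supp y :&: S|], [o = |flip y S|_1];
   these are tied by [o + 2 x = w + s]. *)
Lemma balanced_flip_eq n w c s x o : odd w -> ~~ odd n -> w <= n -> c = n - w ->
  o + 2 * x = w + s ->
  (s == n./2.-1) && (o == n./2) = (s == w.-1./2 + c.-1./2) && (x == w.-1./2).
Proof.
move=> w_odd n_even w_le -> o_eq.
by apply/andP/andP => [[/eqP s_eq /eqP o_eq']|[/eqP s_eq /eqP x_eq]]; split; apply/eqP; lia.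
Qed.

Section Offspring.
Variable n : nat.
Implicit Type y : {ffun 'I_n -> bool}.

Definition mutations : {set {set 'I_n}} :=
  [set S : {set 'I_n} | #|S| == (n./2).-1].

Definition balancing y : {set {set 'I_n}} :=
  [set S : {set 'I_n} | ones (flip y S) == n./2].

Lemma mutations_neq0 : mutations != set0.
Proof. by rewrite -card_gt0 card_draws card_ord bin_gt0; lia. Qed.

Lemma ones_flip y S : ones (flip y S) + 2 * #|[set i | y i] :&: S| = ones y + #|S|.
Proof.
by rewrite /ones -cards_xor; congr (_ + _); apply: eq_card => i; rewrite !inE ffunE.
Qed.

Lemma ones_le y : ones y <= n.
Proof. by rewrite /ones -[X in _ <= X]card_ord max_card. Qed.

Lemma card_mutations_balancing y : ~~ odd n -> odd (ones y) ->
  #|mutations :&: balancing y|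
  = 'C(ones y, (ones y).-1./2) * 'C(n - ones y, (n - ones y).-1./2).
Proof.
move=> n_even w_odd; have w_le := ones_le y; set A := [set i | y i].
have cAc : #|~: A| = n - ones y by have := cardsC A; rewrite card_ord /ones -/A; lia.
rewrite -cAc -card_draws_meet; apply: eq_card => S; rewrite !inE.
exact: balanced_flip_eq w_odd n_even w_le cAc (ones_flip y S).
Qed.

End Offspring.

Local Open Scope R_scope.

Lemma INR_addn m n : INR (m + n) = INR m + INR n.
Proof. by rewrite -plusE plus_INR. Qed.

Lemma INR_muln m n : INR (m * n) = INR m * INR n.
Proof. by rewrite -multE mult_INR. Qed.

Lemma INR_expn m n : INR (m ^ n) = INR m ^ n.
Proof. by elim: n => // n IH; rewrite expnS INR_muln IH. Qed.

Lemma big_Rplus_const (I : finType) (P : pred I) c :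
  \big[Rplus/0]_(i | P i) c = INR #|P| * c.
Proof.
rewrite big_const; elim: #|P| => [|m IH]; first by rewrite /= Rmult_0_l.
by rewrite iterS IH S_INR; ring.
Qed.

Lemma big_Rmult_const (I : finType) (P : pred I) c :
  \big[Rmult/1]_(i | P i) c = c ^ #|P|.
Proof. by rewrite big_const; elim: #|P| => //= m ->. Qed.

Lemma big_Rplus_ge0 (I : finType) (P : pred I) F :
  (forall i, P i -> 0 <= F i) -> 0 <= \big[Rplus/0]_(i | P i) F i.
Proof. by move=> F_ge0; apply: big_ind => // *; lra. Qed.

Lemma markov_count (I : finType) (P Q : pred I) F c :
  (forall i, P i -> 0 <= F i) -> (forall i, P i -> Q i -> c <= F i) ->
  INR #|[pred i | P i && Q i]| * c <= \big[Rplus/0]_(i | P i) F i.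
Proof.
move=> F_ge0 F_ge_c; rewrite (bigID Q) /=.
have := big_Rplus_ge0 (fun i (Pi : P i && ~~ Q i) => F_ge0 i (proj1 (andP Pi))).
have : INR #|[pred i | P i && Q i]| * c <= \big[Rplus/0]_(i | P i && Q i) F i.
  rewrite -big_Rplus_const.
  by apply: big_ind2 => [|*|i /andP[]]; [lra | lra | exact: F_ge_c].
lra.
Qed.

Lemma exp_le_compat x y : x <= y -> exp x <= exp y.
Proof. by case/Rle_lt_or_eq_dec => [/exp_increasing/Rlt_le | ->]; [| apply: Rle_refl]. Qed.

Lemma ln_le_compat x y : 0 < x -> x <= y -> ln x <= ln y.
Proof.
move=> x_gt0; case/Rle_lt_or_eq_dec => [/(ln_increasing _ _ x_gt0)/Rlt_le | ->] //.
exact: Rle_refl.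
Qed.

Lemma pow_le_exp u N : 0 <= 1 + u -> (1 + u) ^ N <= exp (INR N * u).
Proof.
move=> u_ge; elim: N => [|N IH]; first by rewrite /= Rmult_0_l exp_0; apply: Rle_refl.
rewrite S_INR Rmult_plus_distr_r Rmult_1_l exp_plus /= Rmult_comm.
by apply: Rmult_le_compat => //; [apply: pow_le | apply: exp_ineq1_le].
Qed.

(* The inequality [ln t <= t - 1] at [t = sqrt (q / s)] gives the Hellinger
   bound [(sqrt s - sqrt q)^2]; then [(sqrt s + sqrt q)^2 <= 4 m]. *)
Lemma relative_entropy_ge q s m : 0 < q -> 0 < s -> q <= m -> s <= m ->
  (s - q) ^ 2 / (4 * m) <= s * ln (s / q) - s + q.
Proof.
move=> q_gt0 s_gt0 q_le s_le.
have rq := sqrt_lt_R0 _ q_gt0; have rs := sqrt_lt_R0 _ s_gt0.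
have rq2 := sqrt_sqrt _ (Rlt_le _ _ q_gt0); have rs2 := sqrt_sqrt _ (Rlt_le _ _ s_gt0).
set u := sqrt q / sqrt s.
have u_gt0 : 0 < u by apply: Rdiv_lt_0_compat.
have ln_u : ln u <= u - 1 by have := exp_ineq1_le (ln u); rewrite exp_ln //; lra.
have ln_sq : ln (s / q) = - (2 * ln u).
  have uu : u * u = q / s by rewrite /u -[in RHS]rq2 -[in RHS]rs2; field; lra.
  have -> : s / q = / (u * u) by rewrite uu; field; lra.
  rewrite ln_Rinv; last exact: Rmult_lt_0_compat.
  by rewrite ln_mult //; ring.
have su : s * u = sqrt s * sqrt q by rewrite /u -{1}rs2; field; lra.
have hellinger : (sqrt s - sqrt q) ^ 2 <= s * ln (s / q) - s + q by rewrite ln_sq; nra.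
apply: Rle_trans hellinger; apply: (Rmult_le_reg_r (4 * m)); first lra.
rewrite /Rdiv Rmult_assoc Rinv_l ?Rmult_1_r; last lra.
have -> : (s - q) ^ 2 = (sqrt s - sqrt q) ^ 2 * (sqrt s + sqrt q) ^ 2.
  by rewrite -[in LHS]rs2 -[in LHS]rq2; ring.
apply: Rmult_le_compat_l; first exact: pow2_ge_0.
nra.
Qed.

Section ProductSampling.
Variables (T : finType) (D G : {set T}) (N : nat).
Hypothesis D_neq0 : D != set0.

Definition hits (f : {ffun 'I_N -> T}) : nat := #|[set i | f i \in G]|.

Definition success_prob : R := INR #|D :&: G| / INR #|D|.

Definition uniform_prob (E : pred {ffun 'I_N -> T}) : R :=
  INR #|[set f : {ffun 'I_N -> T} | (f \in ffun_on D) && E f]| / INR (#|D| ^ N).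

Lemma card_D_gt0 : 0 < INR #|D|.
Proof. by apply: lt_0_INR; apply/ltP; rewrite card_gt0. Qed.

Lemma success_prob_le1 : success_prob <= 1.
Proof.
have D_gt0 := card_D_gt0; rewrite /success_prob.
apply: (Rmult_le_reg_r (INR #|D|)) => //; rewrite Rmult_1_l /Rdiv Rmult_assoc Rinv_l; last lra.
by rewrite Rmult_1_r; apply: le_INR; apply/leP; apply: subset_leq_card; apply: subsetIl.
Qed.

Lemma big_pow_hits x :
  \big[Rplus/0]_(f in ffun_on D) x ^ hits f
  = (INR #|D| * (1 + (x - 1) * success_prob)) ^ N.
Proof.
have one_trial : \big[Rplus/0]_(S in D) (if S \in G then x else 1)
               = INR #|D| * (1 + (x - 1) * success_prob).
  rewrite (bigID (mem G)) /= (eq_bigr (fun _ => x)) => [|S /andP[_ ->]] //.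
  rewrite [X in _ + X](eq_bigr (fun _ => 1)) => [|S /andP[_ /negbTE ->]] //.
  rewrite !big_Rplus_const.
  have -> : #|[pred S | (S \in D) && (S \in G)]| = #|D :&: G|.
    by rewrite -cardsE; apply: eq_card => S; rewrite !inE.
  have -> : #|[pred S | (S \in D) && (S \notin G)]| = #|D :\: G|.
    by rewrite -cardsE; apply: eq_card => S; rewrite !inE andbC.
  have := card_D_gt0; rewrite /success_prob -(cardsID G D) plus_INR => D_gt0.
  by field; lra.
rewrite -one_trial -[in RHS](card_ord N) -big_Rmult_const bigA_distr_big.
apply: eq_bigr => f _; rewrite /hits cardsE -big_Rmult_const big_mkcond.
by apply: eq_bigr.
Qed.

Lemma uniform_prob_mul_le (E : pred {ffun 'I_N -> T}) x c :
  0 < x -> (forall f, E f -> c <= x ^ hits f) ->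
  uniform_prob E * c <= (1 + (x - 1) * success_prob) ^ N.
Proof.
move=> x_gt0 E_c.
have DN : 0 < INR #|D| ^ N by apply: pow_lt; exact: card_D_gt0.
rewrite /uniform_prob INR_expn; apply: (Rmult_le_reg_l _ _ _ DN).
rewrite (eq_card (B := [pred f | (f \in ffun_on D) && E f])) => [|f]; last by rewrite inE.
set A := INR #|[pred f | (f \in ffun_on D) && E f]|.
have -> : INR #|D| ^ N * (A / INR #|D| ^ N * c) = A * c by field; lra.
rewrite -Rpow_mult_distr -big_pow_hits /A.
by apply: markov_count => f _ //; [apply: pow_le; lra | apply: E_c].
Qed.

Lemma uniform_prob_le_exp (E : pred {ffun 'I_N -> T}) s :
  0 < success_prob -> 0 < s ->
  (forall f, E f -> 0 <= (INR (hits f) - INR N * s) * ln (s / success_prob)) ->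
  uniform_prob E <= exp (- (INR N * (s * ln (s / success_prob) - s + success_prob))).
Proof.
move=> q_gt0 s_gt0 E_sign; have q_le1 := success_prob_le1.
set q := success_prob in q_gt0 q_le1 E_sign *.
have x_gt0 : 0 < s / q by apply: Rdiv_lt_0_compat.
set c := exp (INR N * s * ln (s / q)).
have E_c f : E f -> c <= (s / q) ^ hits f.
  by move/E_sign=> sign; rewrite -Rpower_pow // /Rpower; apply: exp_le_compat; nra.
have := uniform_prob_mul_le x_gt0 E_c.
have -> : 1 + (s / q - 1) * q = 1 + (s - q) by field; lra.
have := pow_le_exp N (ltac:(lra) : 0 <= 1 + (s - q)).
move=> /[swap] /Rle_trans /[apply] bound.
have -> : exp (- (INR N * (s * ln (s / q) - s + q))) = exp (INR N * (s - q)) / c.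
  by rewrite /c /Rdiv -exp_Ropp -exp_plus; f_equal; ring.
have c_gt0 : 0 < c := exp_pos _.
apply: (Rmult_le_reg_r c) => //.
by rewrite /Rdiv Rmult_assoc Rinv_l ?Rmult_1_r; lra.
Qed.

Lemma uniform_prob_le_exp_sqr (E : pred {ffun 'I_N -> T}) s m :
  0 < success_prob -> 0 < s -> success_prob <= m -> s <= m ->
  (forall f, E f -> 0 <= (INR (hits f) - INR N * s) * (ln s - ln success_prob)) ->
  uniform_prob E <= exp (- (INR N * ((s - success_prob) ^ 2 / (4 * m)))).
Proof.
move=> q_gt0 s_gt0 q_le s_le E_sign.
have ln_sq : ln (s / success_prob) = ln s - ln success_prob.
  by rewrite /Rdiv ln_mult ?ln_Rinv //; apply: Rinv_0_lt_compat.
apply: Rle_trans (uniform_prob_le_exp q_gt0 s_gt0 _) _ => [f|].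
  by rewrite ln_sq; apply: E_sign.
apply/exp_le_compat/Ropp_le_contravar/Rmult_le_compat_l; first exact: pos_INR.
exact: relative_entropy_ge.
Qed.

Lemma uniform_prob_upper_tail (E : pred {ffun 'I_N -> T}) s m :
  0 < success_prob -> success_prob <= s -> s <= m ->
  (forall f, E f -> INR N * s <= INR (hits f)) ->
  uniform_prob E <= exp (- (INR N * ((s - success_prob) ^ 2 / (4 * m)))).
Proof.
move=> q_gt0 q_le_s s_le E_ge; apply: uniform_prob_le_exp_sqr; try lra.
move=> f /E_ge; have := ln_le_compat q_gt0 q_le_s; nra.
Qed.

Lemma uniform_prob_lower_tail (E : pred {ffun 'I_N -> T}) s m :
  0 < s -> s <= success_prob -> success_prob <= m ->
  (forall f, E f -> INR (hits f) <= INR N * s) ->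
  uniform_prob E <= exp (- (INR N * ((s - success_prob) ^ 2 / (4 * m)))).
Proof.
move=> s_gt0 s_le_q q_le E_le; apply: uniform_prob_le_exp_sqr; try lra.
move=> f /E_le; have := ln_le_compat s_gt0 s_le_q; nra.
Qed.

End ProductSampling.

Lemma bin_odd_centerS m :
  INR 'C(m.+1.*2.+1, m.+1) * (INR m + 2) = 2 * (2 * INR m + 3) * INR 'C(m.*2.+1, m).
Proof.
have := f_equal INR (mul_bin_odd_center m).
rewrite !INR_muln INR_addn INR_muln !S_INR /= => e.
by rewrite (_ : INR m + 2 = INR m + 1 + 1) ?e; ring.
Qed.

Lemma bin_odd_center_sqr_ge m : 16 ^ m <= (INR m + 1) * INR 'C(m.*2.+1, m) ^ 2.
Proof.
elim: m => [|m IH]; first by rewrite bin0 /=; lra.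
have rec := bin_odd_centerS m; rewrite S_INR.
set c := INR 'C(m.*2.+1, m) in IH rec; set c' := INR _ in rec *.
have x_ge0 := pos_INR m; set x := INR m in IH rec x_ge0 *.
apply: (Rmult_le_reg_l (x + 2)); first lra.
have -> : (x + 2) * ((x + 1 + 1) * c' ^ 2) = (c' * (x + 2)) ^ 2 by ring.
rewrite rec /= -/(16 ^ m).
have : 16 * (x + 2) * 16 ^ m <= 16 * (x + 2) * ((x + 1) * c ^ 2) by apply: Rmult_le_compat_l; lra.
have : 0 <= c ^ 2 by apply: pow2_ge_0.
nra.
Qed.

Lemma bin_odd_center_sqr_le m : INR 'C(m.*2.+1, m) ^ 2 * (2 * INR m + 3) <= 4 * 16 ^ m.
Proof.
elim: m => [|m IH]; first by rewrite bin0 /=; lra.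
have rec := bin_odd_centerS m; rewrite S_INR.
set c := INR 'C(m.*2.+1, m) in IH rec; set c' := INR _ in rec *.
have x_ge0 := pos_INR m; set x := INR m in IH rec x_ge0 *.
apply: (Rmult_le_reg_l ((x + 2) ^ 2)); first nra.
have -> : (x + 2) ^ 2 * (c' ^ 2 * (2 * (x + 1) + 3)) = (c' * (x + 2)) ^ 2 * (2 * x + 5) by ring.
rewrite rec /= -/(16 ^ m).
have : 16 * (2 * x + 3) * (2 * x + 5) * (c ^ 2 * (2 * x + 3))
       <= 16 * (2 * x + 3) * (2 * x + 5) * (4 * 16 ^ m) by apply: Rmult_le_compat_l; nra.
have : 0 < 16 ^ m by apply: pow_lt; lra.
nra.
Qed.

Lemma INR_double m : INR m.*2 = 2 * INR m.
Proof. by rewrite -addnn INR_addn; ring. Qed.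

Lemma INR_bin_gt0 m k : (k <= m)%N -> 0 < INR 'C(m, k).
Proof. by move=> km; apply: lt_0_INR; apply/ltP; rewrite bin_gt0. Qed.

Lemma p_odd_center n i j : n = (i + j).+1.*2 ->
  p_ n i.*2.+1 = INR 'C(i.*2.+1, i) * INR 'C(j.*2.+1, j) * (INR (i + j) + 2)
                 / (2 * (INR (i + j) + 1) * INR 'C((i + j).*2.+1, i + j)).
Proof.
move=> ->; rewrite /p_.
have -> : ((i + j).+1.*2 - i.*2.+1 = j.*2.+1)%N by rewrite -!addnn; lia.
rewrite /= !doubleK.
have den := f_equal INR (mul_bin_center_pred (i + j)).
rewrite !INR_muln INR_double !S_INR in den.
have c_gt0 : 0 < INR 'C((i + j).*2.+1, i + j) by apply: INR_bin_gt0; lia.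
have x_ge0 := pos_INR (i + j).
have -> : INR 'C((i + j).+1.*2, i + j)
          = 2 * (INR (i + j) + 1) * INR 'C((i + j).*2.+1, i + j) / (INR (i + j) + 2).
  by rewrite -[in RHS]den; field; lra.
by field; lra.
Qed.

Lemma p_gt0 n b : 0 < p_ n b.
Proof.
by rewrite /p_; apply: Rdiv_lt_0_compat; [apply: Rmult_lt_0_compat|]; apply: INR_bin_gt0; lia.
Qed.

Lemma odd_even_split b n : odd b -> ~~ odd n -> (b < n)%N ->
  exists i j, b = i.*2.+1 /\ n = (i + j).+1.*2.
Proof. by move=> *; exists b./2, (n - b).-1./2; lia. Qed.

Lemma p_addn2_ratio n b : odd b -> ~~ odd n -> (b + 3 <= n)%N ->
  p_ n (b + 2) * ((INR b + 3) * (INR n - INR b))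
  = p_ n b * ((INR b + 2) * (INR n - INR b + 1)).
Proof.
move=> b_odd n_even bn.
have [i [j [-> ->]]] : exists i j, b = i.*2.+1 /\ n = (i + j.+1).+1.*2.
  by exists b./2, (n - b - 3)./2; lia.
rewrite (_ : i.*2.+1 + 2 = i.+1.*2.+1)%N; last lia.
rewrite (p_odd_center (i := i) (j := j.+1)) //.
rewrite (p_odd_center (i := i.+1) (j := j)); last by rewrite addSnnS.
have i_ge0 := pos_INR i; have j_ge0 := pos_INR j.
have ci : INR 'C(i.+1.*2.+1, i.+1) = 2 * (2 * INR i + 3) * INR 'C(i.*2.+1, i) / (INR i + 2).
  by rewrite -bin_odd_centerS; field; lra.
have cj : INR 'C(j.+1.*2.+1, j.+1) = 2 * (2 * INR j + 3) * INR 'C(j.*2.+1, j) / (INR j + 2).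
  by rewrite -bin_odd_centerS; field; lra.
have c_gt0 : 0 < INR 'C((i + j.+1).*2.+1, i + j.+1) by apply: INR_bin_gt0; lia.
rewrite addSnnS ci cj !S_INR !INR_double !INR_addn !S_INR.
by field; lra.
Qed.

Lemma odd_center_quotient_ge x y X Y Ci Cj Cm :
  0 <= x -> 0 <= y -> 0 < X -> 0 < Y -> 0 < Cm ->
  X <= (x + 1) * Ci ^ 2 -> Y <= (y + 1) * Cj ^ 2 ->
  Cm ^ 2 * (2 * (x + y) + 3) <= 4 * (X * Y) ->
  1 <= 4 * (2 * x + 1 + 1) * (Ci * Cj * (x + y + 2) / (2 * (x + y + 1) * Cm)) ^ 2.
Proof.
move=> x_ge0 y_ge0 X_gt0 Y_gt0 Cm_gt0 ci cj cm.
have prod_ge : X * Y <= (x + 1) * Ci ^ 2 * ((y + 1) * Cj ^ 2).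
  by apply: Rmult_le_compat => //; lra.
have m1_sqr := pow2_ge_0 (x + y + 1).
have step1 : 4 * (x + y + 1) ^ 2 * (Cm ^ 2 * (2 * (x + y) + 3))
             <= 4 * (x + y + 1) ^ 2 * (4 * (X * Y)) by apply: Rmult_le_compat_l; lra.
have step2 : 16 * (x + y + 1) ^ 2 * (X * Y)
             <= 16 * (x + y + 1) ^ 2 * ((x + 1) * Ci ^ 2 * ((y + 1) * Cj ^ 2)).
  by apply: Rmult_le_compat_l; lra.
have step3 : 16 * (x + y + 1) ^ 2 * (y + 1) <= 8 * (x + y + 2) ^ 2 * (2 * (x + y) + 3).
  by nra.
have : 0 <= (x + 1) * Ci ^ 2 * Cj ^ 2 by have := pow2_ge_0 Ci; have := pow2_ge_0 Cj; nra.
move=> weight_ge0; have den_gt0 : 0 < 4 * (x + y + 1) ^ 2 * Cm ^ 2.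
  apply: Rmult_lt_0_compat; last exact: pow_lt.
  by apply: Rmult_lt_0_compat; [lra | apply: pow_lt; lra].
apply: (Rmult_le_reg_r _ _ _ den_gt0); rewrite Rmult_1_l.
have -> : 4 * (2 * x + 1 + 1) * (Ci * Cj * (x + y + 2) / (2 * (x + y + 1) * Cm)) ^ 2 *
          (4 * (x + y + 1) ^ 2 * Cm ^ 2) = 8 * (x + 1) * Ci ^ 2 * Cj ^ 2 * (x + y + 2) ^ 2.
  by field; lra.
by apply: (Rmult_le_reg_r (2 * (x + y) + 3)); nra.
Qed.

Lemma p_sqr_ge n b : odd b -> ~~ odd n -> (b < n)%N -> 1 <= 4 * (INR b + 1) * p_ n b ^ 2.
Proof.
move=> b_odd n_even bn; have [i [j [-> n_eq]]] := odd_even_split b_odd n_even bn.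
rewrite (p_odd_center n_eq) S_INR INR_double INR_addn.
have cm := bin_odd_center_sqr_le (i + j); rewrite INR_addn pow_add in cm.
apply: odd_center_quotient_ge cm; try apply: pos_INR; try (apply: pow_lt; lra).
- by apply: INR_bin_gt0; lia.
- exact: bin_odd_center_sqr_ge.
- exact: bin_odd_center_sqr_ge.
Qed.

Lemma p_addn2_le n b : odd b -> ~~ odd n -> (2 * b + 2 <= n)%N -> p_ n (b + 2) <= p_ n b.
Proof.
move=> b_odd n_even bn; have ratio := p_addn2_ratio b_odd n_even (ltac:(lia) : (b + 3 <= n)%N).
have := le_INR _ _ (ssrnat.leP bn); rewrite INR_addn INR_muln /= => bn_R.
have b_ge0 := pos_INR b; have hi_gt0 := p_gt0 n b.
apply: (Rmult_le_reg_r ((INR b + 3) * (INR n - INR b))); first nra.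
rewrite ratio; apply: Rmult_le_compat_l; nra.
Qed.

Lemma frac_le x y u v : 0 < y -> 0 < v -> x * v <= u * y -> x / y <= u / v.
Proof.
move=> y_gt0 v_gt0 h; apply: (Rmult_le_reg_r (y * v)); first exact: Rmult_lt_0_compat.
have -> : x / y * (y * v) = x * v by field; lra.
by have -> : u / v * (y * v) = u * y by field; lra.
Qed.

Lemma p_gap_ge n a b : odd b -> ~~ odd n -> a = b \/ a = (b + 2)%N ->
  (2 * b + 4 <= n)%N -> (2 * a < n)%N ->
  p_ n b * ((INR n - 2 * INR a) / (8 * INR a * INR n)) <= p_ n b - p_ n (b + 2).
Proof.
move=> b_odd n_even ab bn an.
have ratio := p_addn2_ratio b_odd n_even (ltac:(lia) : (b + 3 <= n)%N).
have b_ge1 : 1 <= INR b by apply: (le_INR 1); apply/ssrnat.leP; lia.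
have := le_INR _ _ (ssrnat.leP bn); rewrite INR_addn INR_muln /= => bn_R.
have p_pos := p_gt0 n b.
have -> : p_ n b - p_ n (b + 2)
          = p_ n b * ((INR n - 2 * INR b - 2) / ((INR b + 3) * (INR n - INR b))).
  have den_gt0 : 0 < (INR b + 3) * (INR n - INR b) by apply: Rmult_lt_0_compat; lra.
  apply: (Rmult_eq_reg_r ((INR b + 3) * (INR n - INR b))); last lra.
  rewrite Rmult_minus_distr_r ratio; field; lra.
apply: Rmult_le_compat_l; first lra.
have a_ge1 : 1 <= INR a by case: ab => ->; rewrite ?INR_addn /=; lra.
apply: frac_le; [nra | nra |].
have := pos_INR n; have x_ge0 := pos_INR b.
case: ab => ->; rewrite ?INR_addn /= => y_ge0.
- have h : (INR b + 3) * (INR n - INR b) <= 4 * INR b * INR n by nra.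
  apply: (Rle_trans _ ((INR n - 2 * INR b) * (4 * INR b * INR n))).
    by apply: Rmult_le_compat_l; lra.
  have : 0 <= INR b * INR n by nra.
  nra.
- rewrite Rmult_comm [X in _ <= X]Rmult_comm.
  by apply: Rmult_le_compat; [nra | lra | nra | lra].
Qed.

Section OffspringSampling.
Variable n : nat.
Implicit Type y : {ffun 'I_n -> bool}.

Lemma p_sub b : (b <= n)%N -> p_ n (n - b) = p_ n b.
Proof. by move=> bn; rewrite /p_ subKn // Rmult_comm. Qed.

Lemma success_prob_balancing y a :
  ~~ odd n -> odd a -> minn (ones y) (n - ones y) = a ->
  success_prob (mutations n) (balancing y) = p_ n a.
Proof.
move=> n_even a_odd ya; have w_le := ones_le y.
have w_odd : odd (ones y) by move: ya; rewrite /minn; case: ltnP => _ ya; lia.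
rewrite /success_prob card_mutations_balancing // card_draws card_ord INR_muln.
have -> : p_ n a = p_ n (ones y).
  by move: ya; rewrite /minn; case: ltnP => _ <- //; rewrite p_sub.
by rewrite /p_ Rmult_comm.
Qed.

Lemma prob_event_uniform N (E : pred {ffun 'I_N -> {set 'I_n}}) :
  prob_event E = uniform_prob (mutations n) E.
Proof.
have space : offspring_space n N = [set f | f \in ffun_on (mutations n)].
  apply/setP => f; rewrite !inE.
  by apply/forallP/ffun_onP => f_in i; move: (f_in i); rewrite inE.
rewrite /prob_event /uniform_prob space [in X in _ / X]cardsE card_ffun_on card_ord.
by congr (INR _ / _); apply: eq_card => f; rewrite !inE.
Qed.

Lemma Ycount_hits N y (f : {ffun 'I_N -> {set 'I_n}}) :
  Ycount y f = hits (balancing y) f.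
Proof. by apply: eq_card => i; rewrite !inE. Qed.

End OffspringSampling.

Lemma sqr_sqrt_exists x : 0 < x -> exists2 r, 0 < r & x = r * r.
Proof. by move=> x_gt0; exists (sqrt x); [apply: sqrt_lt_R0 | rewrite sqrt_sqrt; lra]. Qed.

(* [g >= hi d / (8 x y)] and [hi >= 1 / (3 sqrt x)] make the exponent at least
   [N d^2 / (3072 x^2 sqrt x y^2)]. *)
Lemma exponent_ge k x y d hi g N : 0 < k -> 0 < x -> 0 < y -> 0 < d -> 0 < hi ->
  1 <= 9 * x * hi ^ 2 -> hi * (d / (8 * x * y)) <= g ->
  3072 * k * (x ^ 2 * sqrt x) * y ^ 2 / (d * sqrt d) <= N ->
  k * sqrt d <= N * (g ^ 2 / (16 * hi)).
Proof.
move=> k_gt0 /sqr_sqrt_exists[sx sx_gt0 ->] y_gt0 /sqr_sqrt_exists[sd sd_gt0 ->] hi_gt0.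
rewrite !sqrt_square; try lra.
move=> hi_ge gap N_ge.
have sx_hi : 1 <= 3 * sx * hi.
  by have := Rmult_lt_0_compat _ _ sx_gt0 hi_gt0; nra.
set T := hi * (sd * sd) ^ 2 / (1024 * (sx * sx) ^ 2 * y ^ 2).
have T_ge0 : 0 <= T.
  rewrite /T; apply: Rmult_le_pos; first by have := pow2_ge_0 (sd * sd); nra.
  apply: Rlt_le; apply: Rinv_0_lt_compat.
  by have := pow_lt (sx * sx) 2; have := pow_lt y 2; nra.
have g_ge : T <= g ^ 2 / (16 * hi).
  have u_ge0 : 0 <= hi * (sd * sd / (8 * (sx * sx) * y)).
    by apply: Rmult_le_pos; [lra | apply: Rlt_le; apply: Rdiv_lt_0_compat; nra].
  have -> : T = (hi * (sd * sd / (8 * (sx * sx) * y))) ^ 2 / (16 * hi).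
    by rewrite /T; field; lra.
  apply: Rmult_le_compat_r; first by apply: Rlt_le; apply: Rinv_0_lt_compat; lra.
  exact: pow_incr.
have CT : 3072 * k * ((sx * sx) ^ 2 * sx) * y ^ 2 / (sd * sd * sd) * T
          = 3 * sx * hi * (k * sd).
  by rewrite /T; field; lra.
apply: (Rle_trans _ (3 * sx * hi * (k * sd))).
  by rewrite -[X in X <= _]Rmult_1_l; apply: Rmult_le_compat_r => //; nra.
rewrite -CT; apply: (Rle_trans _ (N * T)); first by apply: Rmult_le_compat_r.
have C_gt0 : 0 < 3072 * k * ((sx * sx) ^ 2 * sx) * y ^ 2 / (sd * sd * sd).
  by apply: Rdiv_lt_0_compat; repeat (apply: Rmult_lt_0_compat || apply: pow_lt); lra.
by apply: Rmult_le_compat_l => //; lra.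
Qed.

Lemma prob_event_upper_tail n N y a b : ~~ odd n -> odd a ->
  minn (ones y) (n - ones y) = a -> a = (b + 2)%N -> (2 * a < n)%N ->
  prob_event (fun f : {ffun 'I_N -> {set 'I_n}} =>
                Rleb (INR N * (p_ n a + p_ n b) / 2) (INR (Ycount y f)))
  <= exp (- (INR N * ((p_ n b - p_ n a) ^ 2 / (16 * p_ n b)))).
Proof.
move=> n_even a_odd ya ab an.
have b_odd : odd b by rewrite ab in a_odd; lia.
have lo_le_hi : p_ n a <= p_ n b by rewrite ab; apply: p_addn2_le => //; lia.
have hi_gt0 := p_gt0 n b.
rewrite prob_event_uniform.
apply: Rle_trans (uniform_prob_upper_tail (mutations_neq0 n) (G := balancing y)
                   (s := (p_ n a + p_ n b) / 2) (m := p_ n b) _ _ _ _) _;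
  rewrite ?(success_prob_balancing n_even a_odd ya).
- exact: p_gt0.
- lra.
- lra.
- by move=> f; rewrite /Rleb Ycount_hits; case: Rle_dec => // h _; lra.
- by apply: Req_le; do 3 f_equal; field; lra.
Qed.

Lemma prob_event_lower_tail n N y a : ~~ odd n -> odd a ->
  minn (ones y) (n - ones y) = a -> (2 * a + 2 < n)%N ->
  prob_event (fun f : {ffun 'I_N -> {set 'I_n}} =>
                Rleb (INR (Ycount y f)) (INR N * (p_ n (a + 2) + p_ n a) / 2))
  <= exp (- (INR N * ((p_ n a - p_ n (a + 2)) ^ 2 / (16 * p_ n a)))).
Proof.
move=> n_even a_odd ya an.
have lo_le_hi : p_ n (a + 2) <= p_ n a by apply: p_addn2_le => //; lia.
have lo_gt0 := p_gt0 n (a + 2); have hi_gt0 := p_gt0 n a.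
rewrite prob_event_uniform.
apply: Rle_trans (uniform_prob_lower_tail (mutations_neq0 n) (G := balancing y)
                   (s := (p_ n (a + 2) + p_ n a) / 2) (m := p_ n a) _ _ _ _) _;
  rewrite ?(success_prob_balancing n_even a_odd ya).
- lra.
- lra.
- lra.
- by move=> f; rewrite /Rleb Ycount_hits; case: Rle_dec => // h _; lra.
- by apply: Req_le; do 3 f_equal; field; lra.
Qed.

Lemma Rpower_5_2 x : 0 < x -> Rpower x (5 / 2) = x ^ 2 * sqrt x.
Proof.
move=> x_gt0; rewrite (_ : 5 / 2 = INR 2 + / 2); last by rewrite /=; field.
by rewrite Rpower_plus Rpower_pow // Rpower_sqrt.
Qed.

Lemma Rpower_3_2 x : 0 < x -> Rpower x (3 / 2) = x * sqrt x.
Proof.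
move=> x_gt0; rewrite (_ : 3 / 2 = 1 + / 2); last by field.
by rewrite Rpower_plus Rpower_1 // Rpower_sqrt.
Qed.

Lemma tail_exponent_ge k n a b c N : 0 < k -> odd b -> ~~ odd n -> c = (b + 2)%N ->
  a = b \/ a = c -> (2 * b + 4 <= n)%N -> (2 * a < n)%N ->
  3072 * k * Rpower (INR a) (5 / 2) * INR n ^ 2 / Rpower (INR n - 2 * INR a) (3 / 2)
    <= INR N ->
  k * sqrt (INR n - 2 * INR a) <= INR N * ((p_ n b - p_ n c) ^ 2 / (16 * p_ n b)).
Proof.
move=> k_gt0 b_odd n_even -> ab bn an.
have a_gt0 : 0 < INR a by apply: (lt_INR 0); apply/ssrnat.ltP; case: ab => ->; lia.
have d_gt0 : 0 < INR n - 2 * INR a.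
  by have := lt_INR _ _ (ssrnat.ltP an); rewrite INR_muln /=; lra.
rewrite Rpower_5_2 // Rpower_3_2 //; apply: exponent_ge => //.
- by apply: (lt_INR 0); apply/ssrnat.ltP; lia.
- exact: p_gt0.
- have := p_sqr_ge b_odd n_even (ltac:(lia) : (b < n)%N).
  have : 4 * (INR b + 1) <= 9 * INR a.
    have := le_INR 1 b (ssrnat.leP (ltac:(lia) : (1 <= b)%N)).
    by case: ab => ->; rewrite ?INR_addn /=; lra.
  by have := pow2_ge_0 (p_ n b); nra.
- exact: p_gap_ge.
Qed.

Theorem lemma17 :
  forall k : R, 0 < k ->
  exists K : R,
  forall n : nat, ~~ odd n ->
  forall a : nat, odd a -> (1 <= a)%N -> (2 * a < n)%N ->
  forall y : {ffun 'I_n -> bool}, minn (ones y) (n - ones y)%N = a ->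
  forall N : nat,
    K * Rpower (INR a) (5/2) * INR n ^ 2
       / Rpower (INR n - 2 * INR a) (3/2) <= INR N ->
    ((3 <= a)%N ->
      @prob_event n N
         (fun f => Rleb (INR N * (p_ n a + p_ n (a - 2)%N) / 2)
                        (INR (Ycount y f)))
       <= exp (- (k * sqrt (INR n - 2 * INR a)))) /\
    ((a <= n./2 - 2)%N ->
      @prob_event n N
         (fun f => Rleb (INR (Ycount y f))
                        (INR N * (p_ n (a + 2)%N + p_ n a) / 2))
       <= exp (- (k * sqrt (INR n - 2 * INR a)))).
Proof.
move=> k k_gt0; exists (3072 * k) => n n_even a a_odd a_ge1 an y ya N N_ge.
split=> [a_ge3 | a_le].
- apply: Rle_trans (prob_event_upper_tail N (b := a - 2) n_even a_odd ya _ an) _; first lia.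
  apply/exp_le_compat/Ropp_le_contravar.
  by apply: (tail_exponent_ge k_gt0 _ n_even _ _ _ an N_ge); lia.
- apply: Rle_trans (prob_event_lower_tail N n_even a_odd ya _) _; first lia.
  apply/exp_le_compat/Ropp_le_contravar.
  by apply: (tail_exponent_ge k_gt0 a_odd n_even _ _ _ an N_ge); lia.
Qed.
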